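(* Let $C=(C,\sup_C)$ be an inductive $P$-algebra, with $s:\mathsf{isind}(C)$. For a fibered $P$-algebra $(E,e)$ over $C$, write $s(E,e)=(\mathsf{elim}(-,e),\bar s)$ and $\mathsf{comp}(x,u,e)=(\mathsf{ext}\,\bar s)_{x,u}:\mathsf{Id}\big(\mathsf{elim}(\sup_C(x,u),e),\ e(x,u,(\lambda y:B(x))\mathsf{elim}(uy,e))\big)$. Then for every fibered $P$-algebra $(E,e)$ over $C$, every $f:(\Pi z:C)E(z)$ and every family $\phi_{x,u}:\mathsf{Id}\big(f(\sup_C(x,u)),\ e(x,u,f\circ u)\big)$ (for $x:A$, $u:B(x)\to C$), there exist (i) ($\eta$-rule) $\eta:(\Pi z:C)\,\mathsf{Id}(f(z),\mathsf{elim}(z,e))$, and (ii) (coherence rule) for all $x:A$, $u:B(x)\to C$, a path $\bar\eta_{x,u}:\mathsf{Id}\big(\mathsf{comp}(x,u,e)\cdot\eta_{\sup_C(x,u)},\ e(x,u,\int\eta_u)\cdot\phi_{x,u}\big)$, where $\int\eta_u:\mathsf{Id}(f\circ u,(\lambda y)\mathsf{elim}(uy,e))$ is the path associated to the homotopy $(\lambda y:B(x))\eta_{uy}$ and $e(x,u,\int\eta_u)$ is its image under $e(x,u,-)$.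
   Context: We work in the intensional Martin-Löf type theory $\mathcal H$ ($\Sigma$, $\Pi$, identity types, a universe $\mathsf U$ à la Russell closed under these, judgemental $\eta$ for $\Pi$, function extensionality; no identity reflection, K or UIP). For paths $p:\mathsf{Id}(a,b)$, $q:\mathsf{Id}(b,c)$, $q\cdot p:\mathsf{Id}(a,c)$ is their composite. For a path $p$ between (dependent) functions, $\mathsf{ext}\,p$ is the associated pointwise homotopy; for a homotopy, $\int$ denotes the path given by function extensionality. Fix $A:\mathsf U$, $B:A\to\mathsf U$. For $C:\mathsf U$, $PC=(\Sigma x:A)(B(x)\to C)$. A $P$-algebra is $(C,\sup_C)$ with $C:\mathsf U$, $\sup_C:PC\to C$. A fibered $P$-algebra over $C$ is $(E,e)$ with $E:C\to\mathsf U$ and $e:(\Pi x:A)(\Pi u:B(x)\to C)((\Pi y:B(x))E(uy))\to E(\sup_C(x,u))$; $\mathsf{FibAlg}(C)$ is their type. A $P$-algebra section of $(E,e)$ is $(f,\bar f)$ with $f:(\Pi z:C)E(z)$ and $\bar f:\mathsf{Id}\big((\lambda x)(\lambda u)f(\sup_C(x,u)),\ (\lambda x)(\lambda u)e(x,u,f\circ u)\big)$; $\mathsf{AlgSec}(C,E)$ is their type. $\mathsf{isind}(C)=(\Pi E:\mathsf{FibAlg}(C))\mathsf{AlgSec}(C,E)$, and $C$ is inductive if this type is inhabited. *)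

(* Vanilla Rocq (no MathComp): intensional MLTT with a proof-relevant
   identity type living in Type (NOT Rocq's Prop-valued eq, which would make
   paths between paths trivial via proof irrelevance). *)

Set Implicit Arguments.

Inductive Id {X : Type} (a : X) : X -> Type :=
  idpath : Id a a.
Arguments idpath {X} a.

(** Path composition: for p : Id a b and q : Id b c, [comp_path q p] is the
    paper's q . p : Id a c. *)
Definition comp_path {X : Type} {a b c : X} (q : Id b c) (p : Id a b) : Id a c :=
  match q in Id _ c' return Id a c' with idpath _ => p end.

Definition ap {X Y : Type} (h : X -> Y) {a b : X} (p : Id a b) : Id (h a) (h b) :=
  match p in Id _ b' return Id (h a) (h b') with idpath _ => idpath (h a) end.

Definition ext {X : Type} {Y : X -> Type} {f g : forall x, Y x} (p : Id f g) :
  forall x, Id (f x) (g x) :=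
  match p in Id _ g' return forall x, Id (f x) (g' x) with
  | idpath _ => fun x => idpath (f x) end.

Record IsEquiv {X Y : Type} (h : X -> Y) : Type := {
  equiv_inv : Y -> X ;
  eisretr : forall y, Id (h (equiv_inv y)) y ;
  eissect : forall x, Id (equiv_inv (h x)) x ;
  eisadj : forall x, Id (eisretr (h x)) (ap h (eissect x))
}.

Definition Funext : Type :=
  forall (X : Type) (Y : X -> Type) (f g : forall x, Y x),
    IsEquiv (fun p : Id f g => ext p).

Definition integral (fe : Funext) {X : Type} {Y : X -> Type} {f g : forall x, Y x}
  (h : forall x, Id (f x) (g x)) : Id f g :=
  equiv_inv (fe X Y f g) h.

Definition PF (A : Type) (B : A -> Type) (C : Type) : Type := {x : A & B x -> C}.

Record FibAlg (A : Type) (B : A -> Type) (C : Type) (supC : PF B C -> C) : Type :=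
  mkFibAlg {
    fE : C -> Type ;
    fe : forall (x : A) (u : B x -> C), (forall y : B x, fE (u y)) ->
           fE (supC (existT _ x u))
  }.

Definition AlgSec (A : Type) (B : A -> Type) (C : Type) (supC : PF B C -> C)
  (EE : FibAlg supC) : Type :=
  { f : forall z : C, fE EE z &
    Id (fun (x : A) (u : B x -> C) => f (supC (existT _ x u)))
       (fun (x : A) (u : B x -> C) => fe EE x u (fun y => f (u y))) }.

Definition isind (A : Type) (B : A -> Type) (C : Type) (supC : PF B C -> C) : Type :=
  forall EE : FibAlg supC, AlgSec EE.

Definition elim (A : Type) (B : A -> Type) (C : Type) (supC : PF B C -> C)
  (s : isind supC) (EE : FibAlg supC) : forall z : C, fE EE z :=
  projT1 (s EE).

Definition compr (A : Type) (B : A -> Type) (C : Type) (supC : PF B C -> C)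
  (s : isind supC) (EE : FibAlg supC) (x : A) (u : B x -> C) :
  Id (elim s EE (supC (existT _ x u)))
     (fe EE x u (fun y => elim s EE (u y))) :=
  ext (ext (projT2 (s EE)) x) u.


(* The η-rule is itself proved by induction, on the fibered algebra of paths
   Id (f z) (elim z, e) whose structure map is dictated by the coherence rule:
   a homotopy h over u is sent to comp⁻¹ · e(x, u, ∫h) · φ.  The computation
   rule of this second induction is then the coherence rule, up to moving
   comp across the equation. *)

Definition inv_path {X : Type} {a b : X} (p : Id a b) : Id b a :=
  match p in Id _ b' return Id b' a with idpath _ => idpath a end.

Lemma comp_path_moveL {X : Type} {a b c : X} (q : Id b c) (r : Id a b) (t : Id a c) :
  Id r (comp_path (inv_path q) t) -> Id (comp_path q r) t.
Proof. destruct q; exact (fun p => p). Defined.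

Section EtaRule.

Variable fe0 : Funext.
Variables (A : Type) (B : A -> Type) (C : Type) (supC : PF B C -> C).
Variable s : isind supC.
Variable EE : FibAlg supC.
Variable f : forall z : C, fE EE z.
Variable phi : forall (x : A) (u : B x -> C),
  Id (f (supC (existT _ x u))) (fe EE x u (fun y => f (u y))).

Definition eta_alg : FibAlg supC :=
  @mkFibAlg A B C supC (fun z => Id (f z) (elim s EE z))
    (fun x u h =>
       comp_path (inv_path (compr s EE x u))
         (comp_path (ap (fe EE x u)
                       (integral fe0 (f := fun y => f (u y))
                                     (g := fun y => elim s EE (u y)) h))
                    (phi x u))).

Definition eta : forall z : C, Id (f z) (elim s EE z) := elim s eta_alg.

Lemma eta_coherence (x : A) (u : B x -> C) :
  Id (comp_path (compr s EE x u) (eta (supC (existT _ x u))))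
     (comp_path (ap (fe EE x u)
                    (integral fe0 (f := fun y => f (u y))
                                  (g := fun y => elim s EE (u y))
                                  (fun y => eta (u y))))
                (phi x u)).
Proof. exact (comp_path_moveL _ _ _ (compr s eta_alg x u)). Defined.

End EtaRule.

Arguments eta fe0 {A B C supC} s {EE} f phi.
Arguments eta_coherence fe0 {A B C supC} s {EE} f phi.

Theorem mainTheorem15 (fe0 : Funext)
  (A : Type) (B : A -> Type) (C : Type) (supC : PF B C -> C)
  (s : isind supC) :
  forall (EE : FibAlg supC) (f : forall z : C, fE EE z)
         (phi : forall (x : A) (u : B x -> C),
                  Id (f (supC (existT _ x u))) (fe EE x u (fun y => f (u y)))),
  { eta : forall z : C, Id (f z) (elim s EE z) &
    forall (x : A) (u : B x -> C),
      Id (comp_path (compr s EE x u) (eta (supC (existT _ x u))))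
         (comp_path (ap (fe EE x u)
                        (integral fe0 (f := fun y => f (u y))
                                      (g := fun y => elim s EE (u y))
                                      (fun y => eta (u y))))
                    (phi x u)) }.
Proof.
  intros EE f phi.
  exists (eta fe0 s f phi).
  exact (eta_coherence fe0 s f phi).
Defined.
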